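(* Let $A$, $B$, $I$ be finite non-empty sets, $\{V_i\}_{i\in I}\subseteq\mathcal R(A)$, $\{W_i\}_{i\in I}\subseteq\mathcal R(B)$, $Z\in\mathcal R(A,B)$, let $t\in\{1,\dots,6\}$, $\phi=\phi^{(t)}$, and define $R_1=Z$, $R_{k+1}=R_k\wedge\phi(R_k)$ for $k\in\mathbb N$. Suppose the subalgebra of $\mathcal L$ generated by $\mathrm{im}(Z)\cup\bigcup_{i\in I}(\mathrm{im}(V_i)\cup\mathrm{im}(W_i))$ is finite. Then: (a) the sequence $\{R_k\}_{k\in\mathbb N}$ is descending and the set $\{R_k:k\in\mathbb N\}$ is finite, and there is a least natural number $k$ such that $R_k=R_{k+1}$; (b) for this $k$, $R_k$ is the greatest solution to the system $WL^{2\text{-}t}(A,B,I,V_i,W_i,Z)$.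
   Context: $\mathcal L=(L,\wedge,\vee,\otimes,\to,0,1)$ is a complete residuated lattice; $\mathrm{im}$ denotes the set of values of a fuzzy relation, and subalgebras are with respect to $(L,\wedge,\vee,\otimes,\to,0,1)$. For non-empty sets $X,Y$, $\mathcal R(X,Y)$ is the set of fuzzy relations $X\times Y\to L$, $\mathcal R(X)=\mathcal R(X,X)$, ordered pointwise with pointwise meets; $R^{-1}(y,x)=R(x,y)$; $(R\circ S)(x,t)=\bigvee_{y}R(x,y)\otimes S(y,t)$. Residuals: for $S\in\mathcal R(X,Y)$, $T\in\mathcal R(X)$, $T'\in\mathcal R(Y)$: $(S/T)(x,y)=\bigwedge_{x'\in X}(T(x',x)\to S(x',y))$, $(S\backslash T')(x,y)=\bigwedge_{y'\in Y}(T'(y,y')\to S(x,y'))$. The maps $\phi^{(t)}:\mathcal R(A,B)\to\mathcal R(A,B)$ are: $\phi^{(1)}(R)=\bigwedge_{i}[(W_i\circ R^{-1})\backslash V_i]^{-1}$; $\phi^{(2)}(R)=\bigwedge_{i}(R\circ W_i)/V_i$; $\phi^{(3)}(R)=\bigwedge_{i}[(W_i\circ R^{-1})\backslash V_i]^{-1}\wedge[(V_i\circ R)\backslash W_i]$; $\phi^{(4)}(R)=\bigwedge_{i}[(R\circ W_i)/V_i]\wedge[(R^{-1}\circ V_i)/W_i]^{-1}$; $\phi^{(5)}(R)=\bigwedge_{i}[(R\circ W_i)/V_i]\wedge[(V_i\circ R)\backslash W_i]$; $\phi^{(6)}(R)=\bigwedge_{i}[(W_i\circ R^{-1})\backslash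 V_i]^{-1}\wedge[(R^{-1}\circ V_i)/W_i]^{-1}$. Heterogeneous systems with unknown $U\in\mathcal R(A,B)$: $WL^{2\text{-}1}$: $U^{-1}\circ V_i\le W_i\circ U^{-1}$ ($i\in I$), $U\le Z$; $WL^{2\text{-}2}$: $V_i\circ U\le U\circ W_i$ ($i\in I$), $U\le Z$; $WL^{2\text{-}3}$: $U^{-1}\circ V_i\le W_i\circ U^{-1}$ and $U\circ W_i\le V_i\circ U$ ($i\in I$), $U\le Z$; $WL^{2\text{-}4}$: $V_i\circ U\le U\circ W_i$ and $W_i\circ U^{-1}\le U^{-1}\circ V_i$ ($i\in I$), $U\le Z$; $WL^{2\text{-}5}$: $V_i\circ U=U\circ W_i$ ($i\in I$), $U\le Z$; $WL^{2\text{-}6}$: $U^{-1}\circ V_i=W_i\circ U^{-1}$ ($i\in I$), $U\le Z$. *)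

From Stdlib Require List.
From mathcomp Require Import all_boot.
Set Implicit Arguments. Unset Strict Implicit. Unset Printing Implicit Defensive.

Record CRL := {
  car :> Type;
  le : car -> car -> Prop;
  sup : (car -> Prop) -> car;
  inf : (car -> Prop) -> car;
  mul : car -> car -> car;
  imp : car -> car -> car;
  zero : car;
  one : car;
  crl_le_refl : forall x, le x x;
  crl_le_antisym : forall x y, le x y -> le y x -> x = y;
  crl_le_trans : forall x y z, le x y -> le y z -> le x z;
  crl_sup_ub : forall (S : car -> Prop) x, S x -> le x (sup S);
  crl_sup_least : forall (S : car -> Prop) y, (forall x, S x -> le x y) -> le (sup S) y;
  crl_inf_lb : forall (S : car -> Prop) x, S x -> le (inf S) x;
  crl_inf_greatest : forall (S : car -> Prop) y, (forall x, S x -> le y x) -> le y (inf S);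
  crl_zero_least : forall x, le zero x;
  crl_one_greatest : forall x, le x one;
  crl_mulA : forall x y z, mul x (mul y z) = mul (mul x y) z;
  crl_mulC : forall x y, mul x y = mul y x;
  crl_mul1 : forall x, mul one x = x;
  crl_adj : forall x y z, le (mul x y) z <-> le x (imp y z)
}.

Arguments le {c}. Arguments sup {c}. Arguments inf {c}. Arguments mul {c}.
Arguments imp {c}. Arguments zero {c}. Arguments one {c}.

Section FuzzyRel.
Variable L : CRL.

Definition meet (x y : L) : L := inf (fun z => z = x \/ z = y).
Definition join (x y : L) : L := sup (fun z => z = x \/ z = y).

Definition fzrel (X Y : Type) := X -> Y -> L.

Definition rle {X Y : Type} (R S : fzrel X Y) := forall x y, le (R x y) (S x y).

Definition conv {X Y : Type} (R : fzrel X Y) : fzrel Y X := fun y x => R x y.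

Definition comp {X Y T : Type} (R : fzrel X Y) (S : fzrel Y T) : fzrel X T :=
  fun x t => sup (fun z => exists y, z = mul (R x y) (S y t)).

Definition rres {X Y : Type} (S : fzrel X Y) (T : fzrel X X) : fzrel X Y :=
  fun x y => inf (fun z => exists x', z = imp (T x' x) (S x' y)).

Definition lres {X Y : Type} (S : fzrel X Y) (T' : fzrel Y Y) : fzrel X Y :=
  fun x y => inf (fun z => exists y', z = imp (T' y y') (S x y')).

Definition rmeet {X Y : Type} (R S : fzrel X Y) : fzrel X Y :=
  fun x y => meet (R x y) (S x y).

Definition bigmeet {I X Y : Type} (F : I -> fzrel X Y) : fzrel X Y :=
  fun x y => inf (fun z => exists i, z = F i x y).

Definition phi {I A B : Type} (t : nat) (V : I -> fzrel A A) (W : I -> fzrel B B)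
  (R : fzrel A B) : fzrel A B :=
  match t with
  | 1 => bigmeet (fun i => conv (lres (comp (W i) (conv R)) (V i)))
  | 2 => bigmeet (fun i => rres (comp R (W i)) (V i))
  | 3 => bigmeet (fun i => rmeet (conv (lres (comp (W i) (conv R)) (V i)))
                                 (lres (comp (V i) R) (W i)))
  | 4 => bigmeet (fun i => rmeet (rres (comp R (W i)) (V i))
                                 (conv (rres (comp (conv R) (V i)) (W i))))
  | 5 => bigmeet (fun i => rmeet (rres (comp R (W i)) (V i))
                                 (lres (comp (V i) R) (W i)))
  | _ => bigmeet (fun i => rmeet (conv (lres (comp (W i) (conv R)) (V i)))
                                 (conv (rres (comp (conv R) (V i)) (W i))))
  end.

Definition WL {I A B : Type} (t : nat) (V : I -> fzrel A A) (W : I -> fzrel B B)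
  (Z : fzrel A B) (U : fzrel A B) : Prop :=
  rle U Z /\
  match t with
  | 1 => forall i, rle (comp (conv U) (V i)) (comp (W i) (conv U))
  | 2 => forall i, rle (comp (V i) U) (comp U (W i))
  | 3 => forall i, rle (comp (conv U) (V i)) (comp (W i) (conv U)) /\
                   rle (comp U (W i)) (comp (V i) U)
  | 4 => forall i, rle (comp (V i) U) (comp U (W i)) /\
                   rle (comp (W i) (conv U)) (comp (conv U) (V i))
  | 5 => forall i, comp (V i) U = comp U (W i)
  | _ => forall i, comp (conv U) (V i) = comp (W i) (conv U)
  end.

Definition greatest_solution {X Y : Type} (P : fzrel X Y -> Prop) (U : fzrel X Y) :=
  P U /\ forall U', P U' -> rle U' U.

(* Rseq f Z n = R_{n+1}, where R_1 = Z and R_{k+1} = R_k /\ f(R_k) *)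
Fixpoint Rseq {X Y : Type} (f : fzrel X Y -> fzrel X Y) (Z : fzrel X Y) (n : nat) : fzrel X Y :=
  match n with
  | 0 => Z
  | n'.+1 => rmeet (Rseq f Z n') (f (Rseq f Z n'))
  end.

Definition subalg_closed (P : L -> Prop) : Prop :=
  P zero /\ P one /\
  forall x y, P x -> P y ->
    P (meet x y) /\ P (join x y) /\ P (mul x y) /\ P (imp x y).

Definition gen_subalg (S : L -> Prop) : L -> Prop :=
  fun x => forall P : L -> Prop, (forall y, S y -> P y) -> subalg_closed P -> P x.

Definition finite_set {T : Type} (P : T -> Prop) : Prop :=
  exists s : seq T, forall x, P x -> List.In x s.

Definition generators {I A B : Type} (Z : fzrel A B) (V : I -> fzrel A A)
  (W : I -> fzrel B B) : L -> Prop :=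
  fun x => (exists a b, x = Z a b) \/ (exists i a a', x = V i a a')
           \/ (exists i b b', x = W i b b').

End FuzzyRel.

(** The map [phi] is assembled from compositions and residuals, so it is monotone,
    and by residuation a relation [U] solves [WL^{2-t}] exactly when
    [U <= Z] and [U <= phi U].  Hence every solution lies below every [R_k], and
    once [R_k = R_{k+1}] the relation [R_k] is itself a solution, the greatest one.
    All entries of all [R_k] lie in the subalgebra generated by the data, which is
    closed under the finite meets and joins occurring in [phi]; as this subalgebra
    is finite, the number of pairs (entry, value below it) strictly drops along the
    descending sequence until it becomes stationary. *)

From Stdlib Require List.
From Pilot Require Import Defs.
From mathcomp Require Import all_boot boolp.

Set Implicit Arguments. Unset Strict Implicit. Unset Printing Implicit Defensive.

Lemma ex_least_nat (P : nat -> Prop) :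
  (exists n, P n) -> exists k, P k /\ forall j, P j -> k <= j.
Proof.
case=> n Pn; have exPb : exists n, `[< P n >] by exists n; apply/asboolP.
case: (ex_minnP exPb) => k /asboolP Pk k_min.
by exists k; split=> // j /asboolP; apply: k_min.
Qed.

Section ResiduatedLattice.
Variable L : CRL.
Implicit Types x y z : L.

Lemma le_meet x y z : le z (meet x y) <-> le z x /\ le z y.
Proof.
split=> [zxy | [zx zy]]; last by apply: crl_inf_greatest => w [] ->.
by split; apply: crl_le_trans zxy _; apply: crl_inf_lb; [left | right].
Qed.

Lemma join_le x y z : le (join x y) z <-> le x z /\ le y z.
Proof.
split=> [xyz | [xz yz]]; last by apply: crl_sup_least => w [] ->.
by split; apply: crl_le_trans _ xyz; apply: crl_sup_ub; [left | right].
Qed.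

Lemma mul_monol x x' y : le x x' -> le (Defs.mul x y) (Defs.mul x' y).
Proof. by move=> xx'; apply/crl_adj/(crl_le_trans xx')/crl_adj/crl_le_refl. Qed.

Lemma mul_monor x y y' : le y y' -> le (Defs.mul x y) (Defs.mul x y').
Proof. by rewrite !(crl_mulC x); apply: mul_monol. Qed.

Lemma inf_image_seq (T : eqType) (f : T -> L) (s : seq T) :
  inf (fun z => exists2 i, i \in s & z = f i) = \big[@meet L/Defs.one]_(i <- s) f i.
Proof.
elim: s => [|x s IHs]; rewrite (big_nil, big_cons).
  apply: crl_le_antisym; first exact: crl_one_greatest.
  by apply: crl_inf_greatest => w [].
rewrite -IHs; set M := inf (fun z => exists2 i, i \in s & z = f i).
apply: crl_le_antisym.
  apply/le_meet; split; first by apply: crl_inf_lb; exists x; rewrite ?mem_head.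
  apply: crl_inf_greatest => w [i i_s ->]; apply: crl_inf_lb.
  by exists i; rewrite // in_cons i_s orbT.
have /le_meet [le_fx le_M] := crl_le_refl (meet (f x) M).
apply: crl_inf_greatest => w [i]; rewrite in_cons => /orP [/eqP -> -> // | i_s ->].
by apply: crl_le_trans le_M _; apply: crl_inf_lb; exists i.
Qed.

Lemma sup_image_seq (T : eqType) (f : T -> L) (s : seq T) :
  sup (fun z => exists2 i, i \in s & z = f i) = \big[@join L/Defs.zero]_(i <- s) f i.
Proof.
elim: s => [|x s IHs]; rewrite (big_nil, big_cons).
  apply: crl_le_antisym; last exact: crl_zero_least.
  by apply: crl_sup_least => w [].
rewrite -IHs; set M := sup (fun z => exists2 i, i \in s & z = f i).
apply: crl_le_antisym; last first.
  apply/join_le; split; first by apply: crl_sup_ub; exists x; rewrite ?mem_head.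
  apply: crl_sup_least => w [i i_s ->]; apply: crl_sup_ub.
  by exists i; rewrite // in_cons i_s orbT.
have /join_le [fx_le M_le] := crl_le_refl (join (f x) M).
apply: crl_sup_least => w [i]; rewrite in_cons => /orP [/eqP -> -> // | i_s ->].
by apply: crl_le_trans _ M_le; apply: crl_sup_ub; exists i.
Qed.

Lemma image_fin (T : finType) (f : T -> L) :
  (fun z => exists i, z = f i) = (fun z => exists2 i, i \in index_enum T & z = f i).
Proof.
apply: funext => z; apply: propext.
by split=> [[i ->] | [i _ ->]]; exists i; rewrite ?mem_index_enum.
Qed.

Lemma inf_image_fin (T : finType) (f : T -> L) :
  inf (fun z => exists i, z = f i) = \big[@meet L/Defs.one]_(i : T) f i.
Proof. by rewrite image_fin inf_image_seq. Qed.

Lemma sup_image_fin (T : finType) (f : T -> L) :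
  sup (fun z => exists i, z = f i) = \big[@join L/Defs.zero]_(i : T) f i.
Proof. by rewrite image_fin sup_image_seq. Qed.

End ResiduatedLattice.

Section RelationAlgebra.
Variable L : CRL.
Implicit Types X Y T : Type.

Lemma rle_refl X Y (R : fzrel L X Y) : rle R R.
Proof. by move=> x y; apply: crl_le_refl. Qed.

Lemma rle_trans X Y (R S U : fzrel L X Y) : rle R S -> rle S U -> rle R U.
Proof. by move=> RS SU x y; apply: crl_le_trans (RS x y) (SU x y). Qed.

Lemma rle_antisym X Y (R S : fzrel L X Y) : rle R S -> rle S R -> R = S.
Proof.
by move=> RS SR; apply: funext => x; apply: funext => y; apply: crl_le_antisym.
Qed.

Lemma eq_rle X Y (R S : fzrel L X Y) : R = S <-> rle R S /\ rle S R.
Proof. by split=> [-> | [] /rle_antisym //]; split; apply: rle_refl. Qed.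

Lemma comp_le X Y T (R : fzrel L X Y) (S : fzrel L Y T) x t c :
  le (Defs.comp R S x t) c <-> forall y, le (Defs.mul (R x y) (S y t)) c.
Proof.
split=> [RSc y | RSc]; last by apply: crl_sup_least => w [y ->].
by apply: crl_le_trans RSc; apply: crl_sup_ub; exists y.
Qed.

Lemma le_comp X Y T (R : fzrel L X Y) (S : fzrel L Y T) x y t :
  le (Defs.mul (R x y) (S y t)) (Defs.comp R S x t).
Proof. by apply: crl_sup_ub; exists y. Qed.

Lemma rle_rres X Y (U S : fzrel L X Y) (T : fzrel L X X) :
  rle U (rres S T) <-> rle (Defs.comp T U) S.
Proof.
split=> [U_res x' y | TUS x y].
  apply/comp_le => x; rewrite crl_mulC; apply/crl_adj.
  by apply: crl_le_trans (U_res x y) _; apply: crl_inf_lb; exists x'.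
apply: crl_inf_greatest => w [x' ->]; apply/crl_adj; rewrite crl_mulC.
exact: crl_le_trans (le_comp _ _ _ _ _) (TUS x' y).
Qed.

Lemma rle_lres X Y (U S : fzrel L X Y) (T : fzrel L Y Y) :
  rle U (lres S T) <-> rle (Defs.comp U T) S.
Proof.
split=> [U_res x y' | UTS x y].
  apply/comp_le => y; apply/crl_adj.
  by apply: crl_le_trans (U_res x y) _; apply: crl_inf_lb; exists y'.
apply: crl_inf_greatest => w [y' ->]; apply/crl_adj.
exact: crl_le_trans (le_comp _ _ _ _ _) (UTS x y').
Qed.

Lemma rle_conv X Y (U : fzrel L X Y) (M : fzrel L Y X) :
  rle U (conv M) <-> rle (conv U) M.
Proof. by split=> UM x y; apply: UM. Qed.

Lemma rle_rmeet X Y (U R S : fzrel L X Y) :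
  rle U (rmeet R S) <-> rle U R /\ rle U S.
Proof.
split=> [URS | [UR US] x y]; last exact/le_meet.
by split=> x y; have /le_meet [] := URS x y.
Qed.

Lemma rle_bigmeet I X Y (U : fzrel L X Y) (F : I -> fzrel L X Y) :
  rle U (bigmeet F) <-> forall i, rle U (F i).
Proof.
split=> [UF i x y | UF x y]; last by apply: crl_inf_greatest => w [i ->]; apply: UF.
by apply: crl_le_trans (UF x y) _; apply: crl_inf_lb; exists i.
Qed.

Lemma comp_monol X Y T (R R' : fzrel L X Y) (S : fzrel L Y T) :
  rle R R' -> rle (Defs.comp R S) (Defs.comp R' S).
Proof.
by move=> RR' x t; apply/comp_le => y; apply: crl_le_trans (le_comp _ _ _ y _);
  apply: mul_monol.
Qed.

Lemma comp_monor X Y T (R : fzrel L X Y) (S S' : fzrel L Y T) :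
  rle S S' -> rle (Defs.comp R S) (Defs.comp R S').
Proof.
by move=> SS' x t; apply/comp_le => y; apply: crl_le_trans (le_comp _ _ _ y _);
  apply: mul_monor.
Qed.

Lemma conv_mono X Y (R R' : fzrel L X Y) : rle R R' -> rle (conv R) (conv R').
Proof. by move=> RR' x y; apply: RR'. Qed.

Lemma rres_mono X Y (S S' : fzrel L X Y) (T : fzrel L X X) :
  rle S S' -> rle (rres S T) (rres S' T).
Proof. by move=> SS'; apply/rle_rres/(rle_trans _ SS')/rle_rres/rle_refl. Qed.

Lemma lres_mono X Y (S S' : fzrel L X Y) (T : fzrel L Y Y) :
  rle S S' -> rle (lres S T) (lres S' T).
Proof. by move=> SS'; apply/rle_lres/(rle_trans _ SS')/rle_lres/rle_refl. Qed.

Lemma rmeet_mono X Y (R R' S S' : fzrel L X Y) :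
  rle R R' -> rle S S' -> rle (rmeet R S) (rmeet R' S').
Proof.
move=> RR' SS'; have /rle_rmeet [RS_R RS_S] := rle_refl (rmeet R S).
by apply/rle_rmeet; split; [apply: rle_trans RS_R RR' | apply: rle_trans RS_S SS'].
Qed.

Lemma bigmeet_mono I X Y (F F' : I -> fzrel L X Y) :
  (forall i, rle (F i) (F' i)) -> rle (bigmeet F) (bigmeet F').
Proof.
move=> FF'; have /rle_bigmeet F_i := rle_refl (bigmeet F).
by apply/rle_bigmeet => i; apply: rle_trans (F_i i) (FF' i).
Qed.

End RelationAlgebra.

Section PhiAndSolutions.
Variables (L : CRL) (I A B : Type) (t : nat).
Variables (V : I -> fzrel L A A) (W : I -> fzrel L B B).

(* Like [phi], this reads every [t] outside [1..6] as [t = 6]. *)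
Definition phi_term (R : fzrel L A B) (i : I) : fzrel L A B :=
  match t with
  | 1 => conv (lres (Defs.comp (W i) (conv R)) (V i))
  | 2 => rres (Defs.comp R (W i)) (V i)
  | 3 => rmeet (conv (lres (Defs.comp (W i) (conv R)) (V i)))
               (lres (Defs.comp (V i) R) (W i))
  | 4 => rmeet (rres (Defs.comp R (W i)) (V i))
               (conv (rres (Defs.comp (conv R) (V i)) (W i)))
  | 5 => rmeet (rres (Defs.comp R (W i)) (V i))
               (lres (Defs.comp (V i) R) (W i))
  | _ => rmeet (conv (lres (Defs.comp (W i) (conv R)) (V i)))
               (conv (rres (Defs.comp (conv R) (V i)) (W i)))
  end.

Definition wl_cond (U : fzrel L A B) (i : I) : Prop :=
  match t with
  | 1 => rle (Defs.comp (conv U) (V i)) (Defs.comp (W i) (conv U))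
  | 2 => rle (Defs.comp (V i) U) (Defs.comp U (W i))
  | 3 => rle (Defs.comp (conv U) (V i)) (Defs.comp (W i) (conv U)) /\
         rle (Defs.comp U (W i)) (Defs.comp (V i) U)
  | 4 => rle (Defs.comp (V i) U) (Defs.comp U (W i)) /\
         rle (Defs.comp (W i) (conv U)) (Defs.comp (conv U) (V i))
  | 5 => Defs.comp (V i) U = Defs.comp U (W i)
  | _ => Defs.comp (conv U) (V i) = Defs.comp (W i) (conv U)
  end.

Lemma phiE R : phi t V W R = bigmeet (phi_term R).
Proof. by rewrite /phi_term; case: t => [|[|[|[|[|[|n]]]]]]; reflexivity. Qed.

Lemma WLE Z U : WL t V W Z U <-> rle U Z /\ forall i, wl_cond U i.
Proof. by rewrite /wl_cond; case: t => [|[|[|[|[|[|n]]]]]]; reflexivity. Qed.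

Lemma phi_term_mono R R' i : rle R R' -> rle (phi_term R i) (phi_term R' i).
Proof.
move=> RR'.
have m1 := conv_mono (lres_mono (V i) (comp_monor (W i) (conv_mono RR'))).
have m2 := rres_mono (V i) (comp_monol (W i) RR').
have m3 := lres_mono (W i) (comp_monor (V i) RR').
have m4 := conv_mono (rres_mono (W i) (comp_monol (V i) (conv_mono RR'))).
by rewrite /phi_term; case: t => [|[|[|[|[|[|n]]]]]] //; apply: rmeet_mono.
Qed.

Lemma phi_mono R R' : rle R R' -> rle (phi t V W R) (phi t V W R').
Proof. by move=> RR'; rewrite !phiE; apply: bigmeet_mono => i; apply: phi_term_mono. Qed.

Lemma rle_phi_term U i : rle U (phi_term U i) <-> wl_cond U i.
Proof.
have c1 : rle U (conv (lres (Defs.comp (W i) (conv U)) (V i))) <->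
          rle (Defs.comp (conv U) (V i)) (Defs.comp (W i) (conv U)).
  by rewrite rle_conv rle_lres.
have c2 : rle U (conv (rres (Defs.comp (conv U) (V i)) (W i))) <->
          rle (Defs.comp (W i) (conv U)) (Defs.comp (conv U) (V i)).
  by rewrite rle_conv rle_rres.
rewrite /phi_term /wl_cond; case: t => [|[|[|[|[|[|n]]]]]];
  by rewrite ?rle_rmeet ?c1 ?c2 ?rle_rres ?rle_lres ?eq_rle.
Qed.

Lemma WL_postfixE Z U : WL t V W Z U <-> rle U Z /\ rle U (phi t V W U).
Proof.
rewrite WLE phiE rle_bigmeet.
by split=> -[UZ U_i]; split=> // i; apply/rle_phi_term.
Qed.

End PhiAndSolutions.

Section SubalgebraValued.
Variables (L : CRL) (P : L -> Prop).
Hypothesis P_closed : subalg_closed P.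

Lemma subalg_meet x y : P x -> P y -> P (meet x y).
Proof. by case: P_closed => _ [_ P_op] Px Py; case: (P_op x y Px Py). Qed.

Lemma subalg_join x y : P x -> P y -> P (join x y).
Proof. by case: P_closed => _ [_ P_op] Px Py; case: (P_op x y Px Py) => _ []. Qed.

Lemma subalg_mul x y : P x -> P y -> P (Defs.mul x y).
Proof. by case: P_closed => _ [_ P_op] Px Py; case: (P_op x y Px Py) => _ [_ []]. Qed.

Lemma subalg_imp x y : P x -> P y -> P (imp x y).
Proof. by case: P_closed => _ [_ P_op] Px Py; case: (P_op x y Px Py) => _ [_ []]. Qed.

Lemma subalg_inf_fin (T : finType) (f : T -> L) :
  (forall i, P (f i)) -> P (inf (fun z => exists i, z = f i)).
Proof.
move=> Pf; rewrite inf_image_fin; apply: big_ind => //; last exact: subalg_meet.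
by case: P_closed => _ [].
Qed.

Lemma subalg_sup_fin (T : finType) (f : T -> L) :
  (forall i, P (f i)) -> P (sup (fun z => exists i, z = f i)).
Proof.
move=> Pf; rewrite sup_image_fin; apply: big_ind => //; last exact: subalg_join.
by case: P_closed.
Qed.

Definition valued_in (X Y : Type) (R : fzrel L X Y) := forall x y, P (R x y).

Lemma valued_in_comp (X Y T : finType) (R : fzrel L X Y) (S : fzrel L Y T) :
  valued_in R -> valued_in S -> valued_in (Defs.comp R S).
Proof. by move=> PR PS x t; apply: subalg_sup_fin => y; apply: subalg_mul. Qed.

Lemma valued_in_rres (X Y : finType) (S : fzrel L X Y) (T : fzrel L X X) :
  valued_in S -> valued_in T -> valued_in (rres S T).
Proof. by move=> PS PT x y; apply: subalg_inf_fin => x'; apply: subalg_imp. Qed.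

Lemma valued_in_lres (X Y : finType) (S : fzrel L X Y) (T : fzrel L Y Y) :
  valued_in S -> valued_in T -> valued_in (lres S T).
Proof. by move=> PS PT x y; apply: subalg_inf_fin => y'; apply: subalg_imp. Qed.

Lemma valued_in_conv (X Y : Type) (R : fzrel L X Y) : valued_in R -> valued_in (conv R).
Proof. by move=> PR x y; apply: PR. Qed.

Lemma valued_in_rmeet (X Y : Type) (R S : fzrel L X Y) :
  valued_in R -> valued_in S -> valued_in (rmeet R S).
Proof. by move=> PR PS x y; apply: subalg_meet. Qed.

Lemma valued_in_bigmeet (I X Y : finType) (F : I -> fzrel L X Y) :
  (forall i, valued_in (F i)) -> valued_in (bigmeet F).
Proof. by move=> PF x y; apply: subalg_inf_fin => i; apply: PF. Qed.

Lemma valued_in_phi (I A B : finType) t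
    (V : I -> fzrel L A A) (W : I -> fzrel L B B) R :
  (forall i, valued_in (V i)) -> (forall i, valued_in (W i)) -> valued_in R ->
  valued_in (phi t V W R).
Proof.
move=> PV PW PR; rewrite phiE; apply: valued_in_bigmeet => i.
have p1 :=
  valued_in_conv (valued_in_lres (valued_in_comp (PW i) (valued_in_conv PR)) (PV i)).
have p2 := valued_in_rres (valued_in_comp PR (PW i)) (PV i).
have p3 := valued_in_lres (valued_in_comp (PV i) PR) (PW i).
have p4 :=
  valued_in_conv (valued_in_rres (valued_in_comp (valued_in_conv PR) (PV i)) (PW i)).
by rewrite /phi_term; case: t => [|[|[|[|[|[|n]]]]]] //; apply: valued_in_rmeet.
Qed.

End SubalgebraValued.

Lemma gen_subalg_closed (L : CRL) (S : L -> Prop) : subalg_closed (gen_subalg S).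
Proof.
split; first by move=> P _ [].
split; first by move=> P _ [_ []].
move=> x y Sx Sy.
have op_in P SP (P_closed : subalg_closed P) :=
  P_closed.2.2 x y (Sx P SP P_closed) (Sy P SP P_closed).
by split; [|split; [|split]] => P SP P_closed; have := op_in P SP P_closed; tauto.
Qed.

Section Stabilization.
Variables (L : CRL) (A B : finType) (s : seq L).

Definition below_vals (R : fzrel L A B) : {set A * B * 'I_(length s)} :=
  [set p | `[< le (List.nth (val p.2) s Defs.zero) (R p.1.1 p.1.2) >]].

Lemma below_vals_proper (R R' : fzrel L A B) :
  (forall a b, List.In (R' a b) s) -> rle R R' -> R <> R' ->
  below_vals R \proper below_vals R'.
Proof.
move=> R's RR' neqRR'; apply/properP; split.
  apply/subsetP => p; rewrite !inE => /asboolP le_R.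
  by apply/asboolP; apply: crl_le_trans le_R (RR' _ _).
have [a [b not_le]] : exists a b, ~ le (R' a b) (R a b).
  apply: contrapT => no_pair; apply/neqRR'/rle_antisym => // a b.
  by apply: contrapT => not_le; apply: no_pair; exists a, b.
have [j [/ltP j_lt nth_j]] := List.In_nth s (R' a b) Defs.zero (R's a b).
exists (a, b, Ordinal j_lt); rewrite !inE /= nth_j; apply/asboolP.
  exact: crl_le_refl.
exact: not_le.
Qed.

(* [#|below_vals (R n)|] strictly decreases while the chain is not stationary. *)
Lemma descending_chain_stabilizes (R : nat -> fzrel L A B) :
  (forall n a b, List.In (R n a b) s) -> (forall n, rle (R n.+1) (R n)) ->
  exists n, R n = R n.+1.
Proof.
move=> Rs R_desc; apply: contrapT => no_stab.
have proper_step n : below_vals (R n.+1) \proper below_vals (R n).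
  by apply: below_vals_proper => // eqR; apply: no_stab; exists n.
have card_bound n : #|below_vals (R n)| + n <= #|below_vals (R 0)|.
  elim: n => [|n IHn]; first by rewrite addn0.
  by rewrite addnS; apply: leq_trans IHn; rewrite ltn_add2r proper_card.
by have := card_bound #|below_vals (R 0)|.+1; rewrite addnS ltnNge leq_addl.
Qed.

End Stabilization.

Section Iteration.
Variables (L : CRL) (X Y : Type) (f : fzrel L X Y -> fzrel L X Y) (Z : fzrel L X Y).
Hypothesis f_mono : forall R R', rle R R' -> rle (f R) (f R').

Let R := Rseq f Z.

Lemma RseqS n : R n.+1 = rmeet (R n) (f (R n)).
Proof. by []. Qed.

Lemma Rseq_desc n : rle (R n.+1) (R n).
Proof. by have /rle_rmeet [] := rle_refl (R n.+1). Qed.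

Lemma Rseq_le_f n : rle (R n.+1) (f (R n)).
Proof. by have /rle_rmeet [] := rle_refl (R n.+1). Qed.

Lemma Rseq_le_Z n : rle (R n) Z.
Proof.
by elim: n => [|n IHn]; [apply: rle_refl | apply: rle_trans (Rseq_desc n) IHn].
Qed.

Lemma Rseq_ge_postfix U n : rle U Z -> rle U (f U) -> rle U (R n).
Proof.
move=> UZ Uf; elim: n => [|n IHn] //; apply/rle_rmeet; split=> //.
exact: rle_trans Uf (f_mono IHn).
Qed.

Lemma Rseq_stable k m : R k = R k.+1 -> R (k + m) = R k.
Proof.
move=> Rk_stable; elim: m => [|m IHm]; first by rewrite addn0.
by rewrite addnS RseqS IHm -RseqS.
Qed.

Lemma Rseq_range_finite k : R k = R k.+1 -> finite_set (fun S => exists n, S = R n).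
Proof.
move=> Rk_stable; set prefix := List.map R (List.seq 0 k.+1).
have in_prefix j : j <= k -> List.In (R j) prefix.
  move=> j_le_k; apply/List.in_map_iff; exists j; split=> //.
  by apply/List.in_seq; split; [apply/leP | apply/ltP].
exists prefix => _ [n ->]; have [/in_prefix // | k_lt_n] := leqP n k.
by rewrite -(subnKC (ltnW k_lt_n)) Rseq_stable //; apply: in_prefix.
Qed.

Lemma Rseq_greatest_postfix k :
  R k = R k.+1 -> greatest_solution (fun U => rle U Z /\ rle U (f U)) (R k).
Proof.
move=> Rk_stable; split=> [|U [UZ Uf]]; last exact: Rseq_ge_postfix.
by split; [apply: Rseq_le_Z | rewrite {1}Rk_stable; apply: Rseq_le_f].
Qed.

End Iteration.

Theorem theorem5p3 (L : CRL) (A B I : finType)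
  (hA : inhabited A) (hB : inhabited B) (hI : inhabited I)
  (V : I -> fzrel L A A) (W : I -> fzrel L B B) (Z : fzrel L A B)
  (t : nat) (ht : (1 <= t <= 6)%N)
  (hfin : finite_set (gen_subalg (generators Z V W))) :
  let R := Rseq (phi t V W) Z in
  (forall n, rle (R n.+1) (R n)) /\
  finite_set (fun X => exists n, X = R n) /\
  exists k, R k = R k.+1 /\ (forall j, R j = R j.+1 -> (k <= j)%N) /\
            greatest_solution (WL t V W Z) (R k).
Proof.
move=> R; have [s gen_in_s] := hfin.
set G := gen_subalg (generators Z V W).
have G_closed : subalg_closed G := gen_subalg_closed _.
have gen_G x : generators Z V W x -> G x by move=> gx P gen_P _; apply: gen_P.
have R_valued n : valued_in G (R n).
  elim: n => [|n IHn]; first by move=> a b; apply: gen_G; left; exists a, b.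
  apply: valued_in_rmeet => //; apply: valued_in_phi => // i x y; apply: gen_G.
    by right; left; exists i, x, y.
  by right; right; exists i, x, y.
have [k0 R_k0] : exists n, R n = R n.+1.
  apply: (@descending_chain_stabilizes L A B s R); last exact: Rseq_desc.
  by move=> n a b; apply: gen_in_s; apply: R_valued.
have [k [R_k k_least]] : exists k, R k = R k.+1 /\ forall j, R j = R j.+1 -> k <= j.
  by apply: ex_least_nat; exists k0.
split; first exact: Rseq_desc.
split; first exact: Rseq_range_finite R_k0.
exists k; split=> //; split=> //.
have [sol_Rk Rk_greatest] := Rseq_greatest_postfix (@phi_mono L I A B t V W) R_k.
split=> [|U /WL_postfixE /Rk_greatest //]; exact/WL_postfixE.
Qed.
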